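(* Let $f_1,\dots,f_M:\mathbb{R}\to[0,1]$ be continuous strictly increasing cumulative distribution functions, $w_i>0$ with $\sum_{i=1}^M w_i=1$, and $F(x)=\sum_{i=1}^M w_i f_i(x)$. Let $\overline{w}_i=1-w_i$. Then for $p\in(0,1)$, \[\max_{i:\ p-\overline{w}_i\ge 0} f_i^{-1}(p-\overline{w}_i)\le F^{-1}(p)\le \min_{i:\ p+\overline{w}_i\le 1} f_i^{-1}(p+\overline{w}_i).\]
   Context: For a continuous strictly increasing cdf $G$, $G^{-1}(q)$ denotes the $q$-quantile of $G$, i.e. the $x$ with $G(x)=q$ (with $G^{-1}(0)=-\infty$, $G^{-1}(1)=+\infty$ where applicable). *)

From Stdlib Require Import Reals ClassicalEpsilon.
From Coquelicot Require Import Coquelicot.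
Open Scope R_scope.

Definition is_cdf (G : R -> R) : Prop :=
  (forall x, 0 <= G x <= 1) /\
  (forall x y, x <= y -> G x <= G y) /\
  (forall x, filterlim G (at_right x) (locally (G x))) /\
  filterlim G (Rbar_locally m_infty) (locally 0) /\
  filterlim G (Rbar_locally p_infty) (locally 1).

Definition strictly_increasing (G : R -> R) : Prop :=
  forall x y, x < y -> G x < G y.

Definition quantile (G : R -> R) (q : R) : Rbar :=
  if Rle_dec q 0 then m_infty
  else if Rle_dec 1 q then p_infty
  else Finite (epsilon (inhabits 0) (fun x => G x = q)).

Definition mixture (M : nat) (w : nat -> R) (f : nat -> R -> R) (x : R) : R :=
  sum_f_R0 (fun i => w i * f i x) (M - 1).

(** Writing the mixture as [F = w_i f_i + (1 - w_i) g] with [g] valued in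
    [[0, 1]] shows [|f_i x - F x| <= 1 - w_i] everywhere.  At the point [x0]
    with [F x0 = p] this gives [p - (1 - w_i) <= f_i x0 <= p + (1 - w_i)], and
    the quantile of the strictly increasing cdf [f_i] turns these into
    [f_i^{-1}(p - (1 - w_i)) <= x0 <= f_i^{-1}(p + (1 - w_i))]. *)

From Stdlib Require Import Reals Lra Lia ClassicalEpsilon.
From Coquelicot Require Import Coquelicot.
Open Scope R_scope.

Lemma sum_f_R0_ge0 (a : nat -> R) (n : nat) :
  (forall j, (j <= n)%nat -> 0 <= a j) -> 0 <= sum_f_R0 a n.
Proof.
  intros a_ge0.
  rewrite <- (Rmult_0_l (INR (S n))), <- sum_cte.
  exact (sum_Rle _ _ n a_ge0).
Qed.

Lemma sum_f_R0_term_le (a : nat -> R) (n i : nat) :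
  (forall j, (j <= n)%nat -> 0 <= a j) -> (i <= n)%nat -> a i <= sum_f_R0 a n.
Proof.
  induction n as [|n IHn]; intros a_ge0 le_in; simpl.
  - replace i with 0%nat by lia; lra.
  - assert (a_Sn_ge0 : 0 <= a (S n)) by (apply a_ge0; lia).
    destruct (Nat.eq_dec i (S n)) as [->|ne_iSn].
    + assert (0 <= sum_f_R0 a n); [|lra].
      apply sum_f_R0_ge0; intros j le_jn; apply a_ge0; lia.
    + assert (a i <= sum_f_R0 a n); [|lra].
      apply IHn; [intros j le_jn; apply a_ge0 | ]; lia.
Qed.

Section WeightedSum.

Variables (n : nat) (w a : nat -> R).
Hypothesis w_ge0 : forall j, (j <= n)%nat -> 0 <= w j.
Hypothesis w_sum1 : sum_f_R0 w n = 1.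
Hypothesis a_in01 : forall j, (j <= n)%nat -> 0 <= a j <= 1.

Lemma weight_le1 (i : nat) : (i <= n)%nat -> w i <= 1.
Proof. intros le_in; rewrite <- w_sum1; exact (sum_f_R0_term_le w n i w_ge0 le_in). Qed.

Lemma weighted_sum_ge_term (i : nat) :
  (i <= n)%nat -> w i * a i <= sum_f_R0 (fun j => w j * a j) n.
Proof.
  apply (sum_f_R0_term_le (fun j => w j * a j)); intros j le_jn.
  apply Rmult_le_pos; [apply w_ge0 | apply a_in01]; exact le_jn.
Qed.

Lemma weighted_sum_le_term (i : nat) :
  (i <= n)%nat -> sum_f_R0 (fun j => w j * a j) n <= w i * a i + (1 - w i).
Proof.
  intros le_in.
  assert (w i * (1 - a i) <= sum_f_R0 (fun j => w j * (1 - a j)) n).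
  { apply (sum_f_R0_term_le (fun j => w j * (1 - a j))); [|exact le_in].
    intros j le_jn; specialize (a_in01 j le_jn).
    apply Rmult_le_pos; [apply w_ge0; exact le_jn | lra]. }
  replace (sum_f_R0 (fun j => w j * (1 - a j)) n)
    with (sum_f_R0 w n - sum_f_R0 (fun j => w j * a j) n) in * by
    (rewrite <- minus_sum; apply sum_eq; intros; ring).
  lra.
Qed.

Lemma weighted_sum_term_close (i : nat) :
  (i <= n)%nat ->
  sum_f_R0 (fun j => w j * a j) n - (1 - w i) <= a i <=
  sum_f_R0 (fun j => w j * a j) n + (1 - w i).
Proof.
  intros le_in.
  pose proof (weight_le1 i le_in); pose proof (w_ge0 i le_in).
  pose proof (a_in01 i le_in).
  pose proof (weighted_sum_ge_term i le_in); pose proof (weighted_sum_le_term i le_in).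
  split; nra.
Qed.

End WeightedSum.

Lemma continuity_pt_weighted_sum (n : nat) (w : nat -> R) (f : nat -> R -> R) (x : R) :
  (forall j, (j <= n)%nat -> continuity_pt (f j) x) ->
  continuity_pt (fun y => sum_f_R0 (fun j => w j * f j y) n) x.
Proof.
  induction n as [|n IHn]; intros f_cont; simpl.
  - apply (continuity_pt_scal (f 0%nat)); apply f_cont; lia.
  - apply (continuity_pt_plus (fun y => sum_f_R0 (fun j => w j * f j y) n)
             (mult_real_fct (w (S n)) (f (S n)))).
    + apply IHn; intros j le_jn; apply f_cont; lia.
    + apply continuity_pt_scal; apply f_cont; lia.
Qed.

Lemma is_lim_weighted_sum (n : nat) (w : nat -> R) (f : nat -> R -> R) (x : Rbar)
    (l : nat -> R) :
  (forall j, (j <= n)%nat -> is_lim (f j) x (l j)) ->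
  is_lim (fun y => sum_f_R0 (fun j => w j * f j y) n) x (sum_f_R0 (fun j => w j * l j) n).
Proof.
  induction n as [|n IHn]; intros f_lim; simpl.
  - apply (is_lim_scal_l (f 0%nat) (w 0%nat) x (l 0%nat)); apply f_lim; lia.
  - apply is_lim_plus'.
    + apply IHn; intros j le_jn; apply f_lim; lia.
    + apply (is_lim_scal_l (f (S n)) (w (S n)) x (l (S n))); apply f_lim; lia.
Qed.

Section Quantile.

Variable G : R -> R.
Hypothesis G_cont : forall x, continuity_pt G x.
Hypothesis G_lim_m_infty : filterlim G (Rbar_locally m_infty) (locally 0).
Hypothesis G_lim_p_infty : filterlim G (Rbar_locally p_infty) (locally 1).

Lemma quantile_solves (q : R) :
  0 < q < 1 -> exists x, quantile G q = Finite x /\ G x = q.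
Proof.
  intros q01.
  assert (ex_sol : exists x, G x = q).
  { destruct (IVT_Rbar_incr G m_infty p_infty 0 1 q G_lim_m_infty G_lim_p_infty)
      as [x [_ [_ Gx]]]; [intros; apply G_cont | exact I | simpl; lra | ].
    exists x; exact Gx. }
  unfold quantile.
  destruct (Rle_dec q 0); [lra|]; destruct (Rle_dec 1 q); [lra|].
  eexists; split; [reflexivity | exact (epsilon_spec _ _ ex_sol)].
Qed.

Hypothesis G_range : forall x, 0 <= G x <= 1.
Hypothesis G_incr : strictly_increasing G.

Lemma quantile_le (q x : R) : q <= G x -> Rbar_le (quantile G q) x.
Proof.
  intros le_qG.
  destruct (Rle_dec q 0) as [q_le0|q_gt0].
  - unfold quantile; destruct (Rle_dec q 0); [exact I | contradiction].
  - assert (G x < 1) by (pose proof (G_incr x (x + 1)); pose proof (G_range (x + 1)); lra).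
    destruct (quantile_solves q) as [y [-> Gy]]; [lra|]; simpl.
    destruct (Rle_lt_dec y x) as [|lt_xy]; [assumption|].
    pose proof (G_incr x y lt_xy); lra.
Qed.

Lemma quantile_ge (q x : R) : G x <= q -> Rbar_le x (quantile G q).
Proof.
  intros le_Gq.
  destruct (Rle_dec 1 q) as [q_ge1|q_lt1].
  - unfold quantile; destruct (Rle_dec q 0); [lra|].
    destruct (Rle_dec 1 q); [exact I | contradiction].
  - assert (0 < G x) by (pose proof (G_incr (x - 1) x); pose proof (G_range (x - 1)); lra).
    destruct (quantile_solves q) as [y [-> Gy]]; [lra|]; simpl.
    destruct (Rle_lt_dec x y) as [|lt_yx]; [assumption|].
    pose proof (G_incr y x lt_yx); lra.
Qed.

End Quantile.

Section Mixture.

Variables (M : nat) (w : nat -> R) (f : nat -> R -> R).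
Hypothesis M_pos : (1 <= M)%nat.
Hypothesis f_cdf : forall i, (i < M)%nat -> is_cdf (f i).
Hypothesis w_pos : forall i, (i < M)%nat -> 0 < w i.
Hypothesis w_sum1 : sum_f_R0 w (M - 1) = 1.

Let below_M (j : nat) : (j <= M - 1)%nat -> (j < M)%nat.
Proof. lia. Qed.

Lemma continuity_pt_mixture (x : R) :
  (forall i, (i < M)%nat -> continuity_pt (f i) x) -> continuity_pt (mixture M w f) x.
Proof.
  intros f_cont; apply continuity_pt_weighted_sum.
  intros j le_j; apply f_cont, below_M, le_j.
Qed.

Lemma is_lim_mixture (x : Rbar) (c : R) :
  (forall i, (i < M)%nat -> is_lim (f i) x c) -> is_lim (mixture M w f) x c.
Proof.
  intros f_lim.
  assert (sum_f_R0 (fun j => w j * c) (M - 1) = c) as <-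
    by (rewrite <- scal_sum, w_sum1; ring).
  apply is_lim_weighted_sum; intros j le_j; apply f_lim, below_M, le_j.
Qed.

Lemma component_close_to_mixture (i : nat) (x : R) :
  (i < M)%nat ->
  mixture M w f x - (1 - w i) <= f i x <= mixture M w f x + (1 - w i).
Proof.
  intros lt_iM; apply weighted_sum_term_close; [| exact w_sum1 | | lia].
  - intros j le_j; left; apply w_pos, below_M, le_j.
  - intros j le_j; apply (f_cdf j (below_M j le_j)).
Qed.

Lemma quantile_mixture_solves (p : R) :
  (forall i, (i < M)%nat -> forall x, continuity_pt (f i) x) -> 0 < p < 1 ->
  exists x, quantile (mixture M w f) p = Finite x /\ mixture M w f x = p.
Proof.
  intros f_cont p01; apply quantile_solves; [| | | exact p01].
  - intros x; apply continuity_pt_mixture; intros i lt_iM; exact (f_cont i lt_iM x).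
  - apply (is_lim_mixture m_infty 0); intros i lt_iM; apply (f_cdf i lt_iM).
  - apply (is_lim_mixture p_infty 1); intros i lt_iM; apply (f_cdf i lt_iM).
Qed.

End Mixture.

Theorem proposition5 (M : nat) (f : nat -> R -> R) (w : nat -> R) (p : R) :
  (1 <= M)%nat ->
  (forall i, (i < M)%nat -> is_cdf (f i)) ->
  (forall i, (i < M)%nat -> forall x, continuity_pt (f i) x) ->
  (forall i, (i < M)%nat -> strictly_increasing (f i)) ->
  (forall i, (i < M)%nat -> 0 < w i) ->
  sum_f_R0 w (M - 1) = 1 ->
  0 < p < 1 ->
  (forall i, (i < M)%nat -> p - (1 - w i) >= 0 ->
     Rbar_le (quantile (f i) (p - (1 - w i))) (quantile (mixture M w f) p)) /\
  (forall i, (i < M)%nat -> p + (1 - w i) <= 1 ->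
     Rbar_le (quantile (mixture M w f) p) (quantile (f i) (p + (1 - w i)))).
Proof.
  intros M_pos f_cdf f_cont f_incr w_pos w_sum1 p01.
  destruct (quantile_mixture_solves M w f M_pos f_cdf w_sum1 p f_cont p01)
    as [x0 [-> F_x0]].
  split; intros i lt_iM _;
    pose proof (component_close_to_mixture M w f M_pos f_cdf w_pos w_sum1 i x0 lt_iM);
    destruct (f_cdf i lt_iM) as [f_range [_ [_ [f_lim_m_infty f_lim_p_infty]]]].
  - apply quantile_le; auto; lra.
  - apply quantile_ge; auto; lra.
Qed.
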